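(* There is no countable totally ordered group $U$ such that every countable totally ordered group admits an order-embedding into $U$.
   Context: A totally ordered group is a group with a total order $\le$ such that $x\le y$ implies $zx\le zy$ and $xz\le yz$ for all $x,y,z$. An order-embedding is an injective group homomorphism preserving the order. *)

Record TOGroup := {
  tog_carrier :> Type;
  tog_mul : tog_carrier -> tog_carrier -> tog_carrier;
  tog_one : tog_carrier;
  tog_inv : tog_carrier -> tog_carrier;
  tog_le : tog_carrier -> tog_carrier -> Prop;
  tog_mulA : forall x y z, tog_mul x (tog_mul y z) = tog_mul (tog_mul x y) z;
  tog_mul1g : forall x, tog_mul tog_one x = x;
  tog_mulVg : forall x, tog_mul (tog_inv x) x = tog_one;
  tog_le_refl : forall x, tog_le x x;
  tog_le_antisym : forall x y, tog_le x y -> tog_le y x -> x = y;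
  tog_le_trans : forall x y z, tog_le x y -> tog_le y z -> tog_le x z;
  tog_le_total : forall x y, tog_le x y \/ tog_le y x;
  tog_le_mull : forall x y z, tog_le x y -> tog_le (tog_mul z x) (tog_mul z y);
  tog_le_mulr : forall x y z, tog_le x y -> tog_le (tog_mul x z) (tog_mul y z)
}.

Definition countable_group (G : TOGroup) : Prop :=
  exists f : G -> nat, forall x y, f x = f y -> x = y.

Definition order_embedding (G H : TOGroup) (f : G -> H) : Prop :=
  (forall x y, f x = f y -> x = y) /\
  (forall x y, f (tog_mul G x y) = tog_mul H (f x) (f y)) /\
  (forall x y, tog_le G x y -> tog_le H (f x) (f y)).

(** The groups [Z * Z] ordered by the sign of [a + b * alpha] (ties broken by
    [b]) form a continuum of countable totally ordered groups. An order
    embedding of the group with parameter [alpha] into a fixed group [U] is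
    determined by the images of the two generators, and these images determine
    [alpha]: for [alpha < beta] some pair of elements is ordered one way for
    [alpha] and the other way for [beta]. A countable universal [U] would
    therefore yield an injection of [R] into [nat]. *)

From Stdlib Require Import Reals Lra Lia ZArith Cantor ClassicalEpsilon.
Open Scope R_scope.

Fixpoint trisect (u : nat -> R) (n : nat) : R * R :=
  match n with
  | O => (0, 1)
  | S k =>
      let (a, b) := trisect u k in
      if Rlt_dec (u k) ((a + b) / 2) then (a + 2 * (b - a) / 3, b)
      else (a, a + (b - a) / 3)
  end.

Lemma trisect_lt u n : fst (trisect u n) < snd (trisect u n).
Proof.
  induction n as [|n IH]; simpl; [lra|].
  destruct (trisect u n) as [a b]; simpl in *.
  destruct (Rlt_dec (u n) ((a + b) / 2)); simpl; lra.
Qed.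

Lemma trisect_step u n :
  fst (trisect u n) <= fst (trisect u (S n)) /\
  snd (trisect u (S n)) <= snd (trisect u n) /\
  forall x, fst (trisect u (S n)) <= x <= snd (trisect u (S n)) -> x <> u n.
Proof.
  pose proof (trisect_lt u n) as H. simpl.
  destruct (trisect u n) as [a b]; simpl in *.
  destruct (Rlt_dec (u n) ((a + b) / 2)); simpl;
    repeat split; try lra; intros x Hx ->; lra.
Qed.

Lemma trisect_mono u m k : (m <= k)%nat ->
  fst (trisect u m) <= fst (trisect u k) /\ snd (trisect u k) <= snd (trisect u m).
Proof.
  induction 1 as [|k _ IH]; [lra|].
  destruct (trisect_step u k) as [H1 [H2 _]]. lra.
Qed.

Lemma trisect_fst_le_snd u n m : fst (trisect u n) <= snd (trisect u m).
Proof.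
  destruct (trisect_mono u n (Nat.max n m)) as [H1 _]; [lia|].
  destruct (trisect_mono u m (Nat.max n m)) as [_ H2]; [lia|].
  pose proof (trisect_lt u (Nat.max n m)). lra.
Qed.

Lemma R_not_enumerable (u : nat -> R) : exists l, forall n, u n <> l.
Proof.
  set (E := fun x => exists n, x = fst (trisect u n)).
  assert (E_bound : bound E).
  { exists (snd (trisect u 0)). intros x [n ->]. apply trisect_fst_le_snd. }
  destruct (completeness E E_bound) as [l [l_ub l_least]].
  { exists (fst (trisect u 0)), 0%nat. reflexivity. }
  exists l. intros n E_n. symmetry in E_n.
  destruct (trisect_step u n) as [_ [_ avoid]]. apply (avoid l); [split|exact E_n].
  - apply l_ub. exists (S n). reflexivity.
  - apply l_least. intros x [k ->]. apply trisect_fst_le_snd.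
Qed.

Lemma R_no_injection_nat (c : R -> nat) : ~ (forall x y, c x = c y -> x = y).
Proof.
  intros c_inj.
  destruct (R_not_enumerable (fun n => epsilon (inhabits 0) (fun x => c x = n)))
    as [l Hl].
  apply (Hl (c l)), c_inj, (epsilon_spec (inhabits 0) (fun x => c x = c l)).
  now exists l.
Qed.

Definition zadd (x y : Z * Z) : Z * Z := (fst x + fst y, snd x + snd y)%Z.
Definition zopp (x : Z * Z) : Z * Z := (- fst x, - snd x)%Z.

Definition slope_weight (alpha : R) (x : Z * Z) : R :=
  IZR (fst x) + IZR (snd x) * alpha.

Definition slope_le (alpha : R) (x y : Z * Z) : Prop :=
  slope_weight alpha x < slope_weight alpha y \/
  (slope_weight alpha x = slope_weight alpha y /\ (snd x <= snd y)%Z).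

Lemma slope_weight_add alpha x y :
  slope_weight alpha (zadd x y) = slope_weight alpha x + slope_weight alpha y.
Proof. unfold slope_weight, zadd; simpl. rewrite !plus_IZR. ring. Qed.

Section SlopeOrder.

Variable alpha : R.

Lemma slope_le_refl x : slope_le alpha x x.
Proof. right. split; [reflexivity | lia]. Qed.

Lemma slope_le_antisym x y : slope_le alpha x y -> slope_le alpha y x -> x = y.
Proof.
  destruct x as [a b], y as [a' b']; unfold slope_le, slope_weight; simpl.
  intros H H'.
  assert (b = b') as <- by (destruct H, H'; lra || lia).
  assert (IZR a = IZR a') as E by (destruct H, H'; lra).
  now apply eq_IZR in E as ->.
Qed.

Lemma slope_le_trans x y z :
  slope_le alpha x y -> slope_le alpha y z -> slope_le alpha x z.
Proof.
  unfold slope_le. intros [H|[H H']] [G|[G G']];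
    solve [left; lra | right; split; [lra | lia]].
Qed.

Lemma slope_le_total x y : slope_le alpha x y \/ slope_le alpha y x.
Proof.
  unfold slope_le.
  destruct (Rtotal_order (slope_weight alpha x) (slope_weight alpha y)) as [H|[H|H]];
    [left; left; exact H | | right; left; exact H].
  destruct (Z.le_ge_cases (snd x) (snd y));
    [left | right]; right; split; (lra || lia).
Qed.

Lemma slope_le_addl x y z : slope_le alpha x y -> slope_le alpha (zadd z x) (zadd z y).
Proof.
  unfold slope_le. rewrite !slope_weight_add. unfold zadd; simpl.
  intros [H|[H H']]; [left; lra | right; split; [lra | lia]].
Qed.

Lemma slope_le_addr x y z : slope_le alpha x y -> slope_le alpha (zadd x z) (zadd y z).
Proof.
  unfold slope_le. rewrite !slope_weight_add. unfold zadd; simpl.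
  intros [H|[H H']]; [left; lra | right; split; [lra | lia]].
Qed.

Definition slope_group : TOGroup.
Proof.
  refine (@Build_TOGroup (Z * Z)%type zadd (0, 0)%Z zopp (slope_le alpha) _ _ _
    slope_le_refl slope_le_antisym slope_le_trans slope_le_total
    slope_le_addl slope_le_addr).
  - intros x y z. unfold zadd; simpl. f_equal; lia.
  - intros [a b]. reflexivity.
  - intros [a b]. unfold zadd, zopp; simpl. f_equal; lia.
Defined.

End SlopeOrder.

Lemma Cantor_to_nat_inj p q : Cantor.to_nat p = Cantor.to_nat q -> p = q.
Proof.
  intros E. apply (f_equal Cantor.of_nat) in E. now rewrite !Cantor.cancel_of_to in E.
Qed.

Definition Z_code (z : Z) : nat := Cantor.to_nat (Z.to_nat z, Z.to_nat (- z)).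

Lemma Z_code_inj z z' : Z_code z = Z_code z' -> z = z'.
Proof.
  unfold Z_code. intros E. apply Cantor_to_nat_inj in E. injection E as E1 E2. lia.
Qed.

Lemma slope_group_countable alpha : countable_group (slope_group alpha).
Proof.
  exists (fun x : Z * Z => Cantor.to_nat (Z_code (fst x), Z_code (snd x))).
  intros [a b] [a' b'] E. apply Cantor_to_nat_inj in E.
  injection E as Ea Eb. apply Z_code_inj in Ea, Eb. now subst.
Qed.

Lemma tog_mulg_inj (U : TOGroup) (z x y : U) :
  tog_mul U z x = tog_mul U z y -> x = y.
Proof.
  intros E.
  rewrite <- (tog_mul1g U x), <- (tog_mul1g U y), <- (tog_mulVg U z),
    <- !tog_mulA, E.
  reflexivity.
Qed.

Section HomomorphismsFromZ2.

Variables (U : TOGroup) (f g : Z * Z -> U).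
Hypothesis f_hom : forall x y, f (zadd x y) = tog_mul U (f x) (f y).
Hypothesis g_hom : forall x y, g (zadd x y) = tog_mul U (g x) (g y).

Lemma homs_agree_add x y : f x = g x -> f y = g y -> f (zadd x y) = g (zadd x y).
Proof. intros Ex Ey. now rewrite f_hom, g_hom, Ex, Ey. Qed.

Lemma homs_agree_cancel x y : f x = g x -> f (zadd x y) = g (zadd x y) -> f y = g y.
Proof.
  intros Ex Exy. rewrite f_hom, g_hom, Ex in Exy. exact (tog_mulg_inj U _ _ _ Exy).
Qed.

Lemma homs_agree_multiples e : f e = g e ->
  forall a, f (a * fst e, a * snd e)%Z = g (a * fst e, a * snd e)%Z.
Proof.
  destruct e as [p q]. intros Ee a; simpl.
  induction a as [|a IH|a IH] using Z.peano_ind.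
  - apply (homs_agree_cancel (p, q) (0, 0)%Z Ee).
    unfold zadd; simpl. now rewrite !Z.add_0_r.
  - replace (Z.succ a * p, Z.succ a * q)%Z with (zadd (p, q) (a * p, a * q)%Z)
      by (unfold zadd; simpl; f_equal; ring).
    now apply homs_agree_add.
  - apply (homs_agree_cancel (p, q)); [exact Ee|].
    replace (zadd (p, q) (Z.pred a * p, Z.pred a * q)%Z) with (a * p, a * q)%Z
      by (unfold zadd; simpl; f_equal; unfold Z.pred; ring).
    exact IH.
Qed.

Lemma homs_agree_on_generators :
  f (1, 0)%Z = g (1, 0)%Z -> f (0, 1)%Z = g (0, 1)%Z -> forall x, f x = g x.
Proof.
  intros E1 E2 [a b].
  replace (a, b) with (zadd (a * 1, a * 0) (b * 0, b * 1))%Z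
    by (unfold zadd; simpl; f_equal; ring).
  apply homs_agree_add;
    [exact (homs_agree_multiples _ E1 a) | exact (homs_agree_multiples _ E2 b)].
Qed.

End HomomorphismsFromZ2.

(** For [alpha < beta] take [N > 1 / (beta - alpha)] and [m = up (N alpha)],
    so that [N alpha < m < N beta]; the elements [(0, N)] and [(m, 0)] are
    then ordered differently by the two slopes. *)
Lemma slope_orders_separate alpha beta : alpha < beta ->
  exists x y, slope_le alpha x y /\ slope_le beta y x /\ x <> y.
Proof.
  intros lt_ab.
  destruct (archimed (/ (beta - alpha))) as [N_gt _].
  set (N := up (/ (beta - alpha))) in *.
  destruct (archimed (IZR N * alpha)) as [m_gt m_le].
  set (m := up (IZR N * alpha)) in *.
  assert (inv_pos : 0 < / (beta - alpha)) by (apply Rinv_0_lt_compat; lra).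
  assert (gap : 1 < IZR N * beta - IZR N * alpha).
  { rewrite <- Rmult_minus_distr_l, <- (Rinv_l (beta - alpha)) by lra.
    apply Rmult_lt_compat_r; lra. }
  exists (0, N)%Z, (m, 0)%Z. unfold slope_le, slope_weight; simpl.
  split; [|split].
  - left. lra.
  - left. lra.
  - intros E. injection E as _ N0. rewrite N0 in N_gt. simpl in N_gt. lra.
Qed.

Lemma slope_embeddings_same_generators_not_lt (U : TOGroup) alpha beta
  (f : slope_group alpha -> U) (g : slope_group beta -> U) :
  order_embedding (slope_group alpha) U f -> order_embedding (slope_group beta) U g ->
  f (1, 0)%Z = g (1, 0)%Z -> f (0, 1)%Z = g (0, 1)%Z -> ~ alpha < beta.
Proof.
  intros [f_inj [f_hom f_mono]] [_ [g_hom g_mono]] E1 E2 lt_ab.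
  pose proof (homs_agree_on_generators U f g f_hom g_hom E1 E2) as agree.
  destruct (slope_orders_separate alpha beta lt_ab) as [x [y [le_xy [le_yx neq]]]].
  apply neq, f_inj, (tog_le_antisym U).
  - exact (f_mono x y le_xy).
  - rewrite !agree. exact (g_mono y x le_yx).
Qed.

Lemma slope_embeddings_same_generators (U : TOGroup) alpha beta
  (f : slope_group alpha -> U) (g : slope_group beta -> U) :
  order_embedding (slope_group alpha) U f -> order_embedding (slope_group beta) U g ->
  f (1, 0)%Z = g (1, 0)%Z -> f (0, 1)%Z = g (0, 1)%Z -> alpha = beta.
Proof.
  intros Hf Hg E1 E2.
  destruct (Rtotal_order alpha beta) as [lt|[eq|gt]]; [exfalso | exact eq | exfalso].
  - exact (slope_embeddings_same_generators_not_lt U alpha beta f g Hf Hg E1 E2 lt).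
  - exact (slope_embeddings_same_generators_not_lt U beta alpha g f Hg Hf
             (eq_sym E1) (eq_sym E2) gt).
Qed.

Theorem mainTheorem3 :
  ~ (exists U : TOGroup, countable_group U /\
       forall G : TOGroup, countable_group G ->
         exists f : G -> U, order_embedding G U f).
Proof.
  intros [U [[c c_inj] universal]].
  assert (generators : forall alpha : R, exists uv : U * U,
    exists f : slope_group alpha -> U, order_embedding (slope_group alpha) U f /\
      f (1, 0)%Z = fst uv /\ f (0, 1)%Z = snd uv).
  { intros alpha.
    destruct (universal _ (slope_group_countable alpha)) as [f Hf].
    exists (f (1, 0)%Z, f (0, 1)%Z), f. auto. }
  destruct (choice _ generators) as [gen gen_spec].
  apply (R_no_injection_nat
           (fun alpha => Cantor.to_nat (c (fst (gen alpha)), c (snd (gen alpha))))).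
  intros alpha beta E. apply Cantor_to_nat_inj in E.
  injection E as E1 E2. apply c_inj in E1, E2.
  destruct (gen_spec alpha) as [f [Hf [F1 F2]]], (gen_spec beta) as [g [Hg [G1 G2]]].
  apply (slope_embeddings_same_generators U alpha beta f g Hf Hg); congruence.
Qed.
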